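(* Let $\sigma>0$ and $m\in\mathbb{N}$ with $m\ge\sigma$. Let $Q_m$ be the $L_2(0,1)$-orthogonal projection onto piecewise constant functions on the partition $\Delta_i=[(i-1)/m,i/m)$, $[Q_mx](s)=m\int_{\Delta_i}x(t)\,dt$ for $s\in\Delta_i$, and let $Q_m^\sigma$ be the $\langle\cdot,\cdot\rangle_\sigma$-orthogonal projection onto $\{e^{\sigma\cdot}p: p \text{ piecewise constant on this partition}\}$, i.e. $[Q_m^\sigma x](s)=e^{\sigma s}m\int_{\Delta_i}e^{-\sigma t}x(t)\,dt$ for $s\in\Delta_i$. Then $$\|Q_m-Q_m^\sigma\|_{\sigma\to\sigma}\le\frac{2\sigma}{m}\qquad\text{and}\qquad\|Q_m\|_{\sigma\to\sigma}\le1+\frac{2\sigma}{m}.$$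
   Context: $\langle x,y\rangle_\sigma=\int_0^1e^{-2\sigma t}x(t)y(t)\,dt$, $\|x\|_\sigma=\langle x,x\rangle_\sigma^{1/2}$, and for a linear operator $A$ on $L_2(0,1)$, $\|A\|_{\sigma\to\sigma}=\sup_{x\ne0}\|Ax\|_\sigma/\|x\|_\sigma$. *)

From HB Require Import structures.
From mathcomp Require Import all_boot all_order all_algebra.
From mathcomp Require Import all_classical all_reals all_analysis.
Set Implicit Arguments. Unset Strict Implicit. Unset Printing Implicit Defensive.
Import Order.TTheory GRing.Theory Num.Theory.
Local Open Scope classical_set_scope.
Local Open Scope ring_scope.

Section Defs.
Variable R : realType.
Local Notation mu := (@lebesgue_measure R).

Definition inL2 (x : R -> R) : Prop :=
  measurable_fun (`]0%R, 1%R[ : set R) x /\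
  mu.-integrable (`]0%R, 1%R[ : set R) (fun t => ((x t) ^+ 2)%:E).

Definition wnorm (sigma : R) (x : R -> R) : R :=
  Num.sqrt (Rintegral mu (`]0%R, 1%R[ : set R) (fun t => expR (- (2 * sigma * t)) * (x t) ^+ 2)).

(* left endpoint (i-1)/m of the cell Delta_i = [(i-1)/m, i/m) containing s *)
Definition cell_left (m : nat) (s : R) : R :=
  (Num.floor (m%:R * s))%:~R / m%:R.

Definition cell (m : nat) (s : R) : set R :=
  `[cell_left m s, cell_left m s + m%:R^-1[.

Definition Qm (m : nat) (x : R -> R) : R -> R := fun s =>
  if (0 <= s) && (s < 1) then m%:R * Rintegral mu (cell m s) x else 0.

Definition Qms (sigma : R) (m : nat) (x : R -> R) : R -> R := fun s =>
  if (0 <= s) && (s < 1) then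
    expR (sigma * s) * (m%:R * Rintegral mu (cell m s) (fun t => expR (- (sigma * t)) * x t))
  else 0.

End Defs.

(* Write y(t) = e^{-sigma t} x(t), so that ||x||_sigma is the L_2(0,1) norm of y.
   For s in the cell Delta_i,
     e^{-sigma s} (Q_m x - Q_m^sigma x)(s) = m int_{Delta_i} (e^{sigma (t - s)} - 1) y(t) dt,
     e^{-sigma s} (Q_m x)(s)              = m int_{Delta_i} e^{sigma (t - s)} y(t) dt,
   and |sigma (t - s)| <= sigma / m <= 1 bounds the two kernels by 2 sigma / m and
   1 + 2 sigma / m (convexity of exp and e <= 3).  By Cauchy-Schwarz on the cell, of
   length 1/m, the square of the weighted function at s is at most K^2 m int_{Delta_i} y^2;
   integrating over s and summing over the m cells gives K^2 ||y||^2. *)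

From HB Require Import structures.
From mathcomp Require Import all_boot all_order all_algebra.
From mathcomp Require Import all_classical all_reals all_analysis.
From mathcomp Require Import ring lra measurable_realfun.
Import Order.TTheory GRing.Theory Num.Theory.
Local Open Scope classical_set_scope.
Local Open Scope ring_scope.

Section expR_bounds.
Variable R : realType.

Lemma expR1_le3 : expR (1 : R) <= 3.
Proof.
rewrite [X in expR X](_ : (1 : R) = 8%:R * 8%:R^-1); last by rewrite mulfV.
rewrite expRM_natl.
have expR_inv8 : expR (8%:R^-1 : R) <= 8%:R / 7%:R.
  have := expR_ge1Dx (- (8%:R^-1 : R)).
  have := expRxMexpNx_1 (8%:R^-1 : R).
  have := expR_gt0 (8%:R^-1 : R).
  rewrite ler_pdivlMr ?ltr0n //; nra.
apply: (@le_trans _ _ ((8%:R / 7%:R) ^+ 8)).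
  by apply: lerXn2r => //; rewrite nnegrE ?expR_ge0 ?divr_ge0.
rewrite !exprS expr0; lra.
Qed.

Lemma expR_le1D2x (u : R) : 0 <= u -> u <= 1 -> expR u <= 1 + 2 * u.
Proof.
move=> u0 u1.
(* e^u lies below the chord (1 - u) + u e of the convex function expR. *)
have := convex_expR (Itv01 u0 u1) (1 : R^o) (0 : R^o).
rewrite !convRE /= expR0 mulr1 mulr0 addr0 /unstable.onem => chord.
have := expR1_le3; nra.
Qed.

Lemma normr_expRB1_le (u c : R) : `|u| <= c -> c <= 1 -> `|expR u - 1| <= 2 * c.
Proof.
move=> uc c1; have := expR_ge1Dx u.
have [u0|u0] := leP 0 u.
- have := @expR_le1D2x u u0 (le_trans (ler_norm u) (le_trans uc c1)).
  move: uc; rewrite ger0_norm // => uc e1 e2.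
  by rewrite ger0_norm; lra.
- move: uc; rewrite ltr0_norm // => uc e1.
  have : expR u <= 1 by rewrite expR_le1 ltW.
  by move=> e2; rewrite ler0_norm; lra.
Qed.

End expR_bounds.

Section real_integrals.
Context {d : measure_display} {T : measurableType d} {R : realType}
  {mu : {measure set T -> \bar R}}.
Implicit Types (A : set T) (f g h : T -> R).

Lemma integrable_cst_lty {A} (k : R) : measurable A -> (mu A < +oo)%E ->
  mu.-integrable A (fun=> k%:E).
Proof.
move=> mA Afin; apply/integrableP; split; first exact: measurable_cst.
by rewrite (eq_integral (cst `|k|%:E)) // integral_cst // lte_mul_pinfty.
Qed.

Lemma integrableB_fun {A f g} : measurable A ->
  mu.-integrable A (EFin \o f) -> mu.-integrable A (EFin \o g) ->
  mu.-integrable A (EFin \o (fun t => f t - g t)).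
Proof.
move=> mA intf intg; have := integrableB mA intf intg.
by apply: eq_integrable => // t _.
Qed.

Lemma integrableZl_fun {A} (k : R) {f} : measurable A ->
  mu.-integrable A (EFin \o f) -> mu.-integrable A (EFin \o (fun t => k * f t)).
Proof.
move=> mA intf; have := integrableZl mA k intf.
by apply: eq_integrable => // t _.
Qed.

Lemma integrable_sqr_integrable {A f} : measurable A -> (mu A < +oo)%E ->
  measurable_fun A f -> mu.-integrable A (EFin \o (fun t => f t ^+ 2)) ->
  mu.-integrable A (EFin \o f).
Proof.
move=> mA Afin mf intf2.
have int1f2 : mu.-integrable A (EFin \o (fun t => 1 + f t ^+ 2)).
  have := integrableD mA (integrable_cst_lty 1 mA Afin) intf2.
  by apply: eq_integrable => // t _.
apply: le_integrable int1f2 => //; first exact/measurable_EFinP.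
move=> t _; rewrite /= lee_fin; apply: le_trans (ler_norm _).
rewrite -[f t ^+ 2]real_normK ?num_real //.
have : 0 <= `|f t| by []; nra.
Qed.

Lemma Rintegral_normr_sqr_le {A f} {L : R} : measurable A -> mu A = L%:E -> 0 < L ->
  mu.-integrable A (EFin \o f) -> mu.-integrable A (EFin \o (fun t => f t ^+ 2)) ->
  (Rintegral mu A (fun t => `|f t|)) ^+ 2 <= L * Rintegral mu A (fun t => f t ^+ 2).
Proof.
move=> mA muA L0 intf intf2.
set I1 := Rintegral mu A (fun t => `|f t|).
set I2 := Rintegral mu A (fun t => f t ^+ 2).
set c := I1 / L.
have Afin : (mu A < +oo)%E by rewrite muA ltry.
have intnf := integrable_norm intf.
(* Expand the nonnegative integral of (|f| - c)^2 with the mean c of |f|. *)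
have : 0 <= Rintegral mu A (fun t => (`|f t| - c) ^+ 2).
  by apply: Rintegral_ge0 => t _; exact: sqr_ge0.
have -> : Rintegral mu A (fun t => (`|f t| - c) ^+ 2) =
    Rintegral mu A (fun t => (f t ^+ 2 - (2 * c) * `|f t|) + c ^+ 2).
  by apply: eq_Rintegral => t _; rewrite sqrrB real_normK ?num_real //; ring.
rewrite RintegralD //; last 2 first.
- by apply: integrableB_fun => //; exact: integrableZl_fun.
- exact: integrable_cst_lty.
rewrite RintegralB //; last exact: integrableZl_fun.
rewrite RintegralZl // Rintegral_cst // muA /= -/I1 -/I2 /c => ge0.
have : 0 <= L * (I2 - 2 * (I1 / L) * I1 + (I1 / L) ^+ 2 * L) by rewrite mulr_ge0 // ltW.
suff -> : L * (I2 - 2 * (I1 / L) * I1 + (I1 / L) ^+ 2 * L) = L * I2 - I1 ^+ 2.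
  by rewrite subr_ge0.
by field; rewrite gt_eqF.
Qed.

Lemma sqr_Rintegral_le_dominated {A h g} {K L : R} :
  measurable A -> mu A = L%:E -> 0 < L -> 0 <= K ->
  mu.-integrable A (EFin \o h) -> mu.-integrable A (EFin \o g) ->
  mu.-integrable A (EFin \o (fun t => g t ^+ 2)) ->
  (forall t, A t -> `|h t| <= K * `|g t|) ->
  (Rintegral mu A h) ^+ 2 <= K ^+ 2 * L * Rintegral mu A (fun t => g t ^+ 2).
Proof.
move=> mA muA L0 K0 inth intg intg2 hg.
have intKg : mu.-integrable A (EFin \o (fun t => K * `|g t|)).
  by apply: integrableZl_fun => //; exact: integrable_norm.
have normh_le : `|Rintegral mu A h| <= K * Rintegral mu A (fun t => `|g t|).
  apply: le_trans (le_normr_Rintegral mA inth) _.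
  rewrite -RintegralZl //; last exact: integrable_norm.
  exact: le_Rintegral (integrable_norm inth) intKg hg.
have int_normg_ge0 : 0 <= Rintegral mu A (fun t => `|g t|).
  by apply: Rintegral_ge0 => t _.
rewrite -real_normK ?num_real //.
apply: le_trans (_ : _ <= (K * Rintegral mu A (fun t => `|g t|)) ^+ 2) _.
  by rewrite lerXn2r // nnegrE // mulr_ge0.
rewrite exprMn -mulrA ler_wpM2l ?sqr_ge0 //.
exact: Rintegral_normr_sqr_le.
Qed.

(* Monotonicity of the nonnegative integral needs no measurability (it is a
   supremum over simple functions); Q_m x is never shown to be measurable. *)
Lemma ge0_le_integral_nonmeasurable {A} {f g : T -> \bar R} :
  (forall t, A t -> (0 <= f t)%E) -> (forall t, A t -> (f t <= g t)%E) ->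
  (\int[mu]_(t in A) f t <= \int[mu]_(t in A) g t)%E.
Proof.
move=> f0 fg.
have g0 t : A t -> (0 <= g t)%E by move=> At; exact: le_trans (f0 t At) (fg t At).
rewrite (ge0_integralE _ f0) (ge0_integralE _ g0).
apply: ereal_sup_le => _ [s sf <-]; exists s => //= t.
apply: le_trans (sf t) _; rewrite /patch; case: ifP => // /set_mem; exact: fg.
Qed.

End real_integrals.

Section unit_interval.
Context {R : realType}.
Local Notation mu := (@lebesgue_measure R).
Local Notation I01 := (`]0%R, 1%R[%classic : set R).
Implicit Types (sigma : R) (x : R -> R).

Definition damped sigma x (t : R) : R := expR (- (sigma * t)) * x t.

Lemma wnormE sigma x :
  wnorm sigma x = Num.sqrt (Rintegral mu I01 (fun t => damped sigma x t ^+ 2)).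
Proof.
congr Num.sqrt; apply: eq_Rintegral => t _.
by rewrite exprMn -expRM_natl; congr (expR _ * _); rewrite mulrN mulrA.
Qed.

Lemma measurable_damped sigma (A : set R) x :
  measurable_fun A x -> measurable_fun A (damped sigma x).
Proof.
move=> mx; apply: measurable_funM => //.
by apply: measurableT_comp => //; apply: measurableT_comp.
Qed.

Lemma damped_inL2 {sigma x} : 0 <= sigma -> inL2 x -> inL2 (damped sigma x).
Proof.
move=> s0 [mx intx2]; split; first exact: measurable_damped.
apply: le_integrable intx2 => //.
  by apply/measurable_EFinP; apply: measurable_funX; exact: measurable_damped.
move=> t; rewrite /= in_itv /= => /andP[t0 _].
rewrite lee_fin !ger0_norm ?sqr_ge0 // /damped exprMn ler_piMl ?sqr_ge0 //.
by rewrite expr_le1 ?expR_ge0 // expR_le1 oppr_le0 mulr_ge0 // ltW.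
Qed.

Lemma inL2_integrable {x} : inL2 x -> mu.-integrable I01 (EFin \o x).
Proof.
move=> [mx intx2]; apply: integrable_sqr_integrable => //.
by rewrite /= lebesgue_measure_itv /= lte01 ltry.
Qed.

Lemma expRN_mul_damped sigma x (s t : R) :
  expR (- (sigma * s)) * x t = expR (sigma * (t - s)) * damped sigma x t.
Proof. by rewrite /damped mulrA -expRD; congr (expR _ * _); ring. Qed.

(* x is only known to be measurable on ]0, 1[, which misses the left end of the
   first cell [0, 1/m[; cell integrals are therefore taken over open cells. *)
Definition open_cell (m i : nat) : set R :=
  `](i%:R / m%:R), (i%:R / m%:R + m%:R^-1)[.
Definition half_open_cell (m i : nat) : set R :=
  `[(i%:R / m%:R), (i%:R / m%:R + m%:R^-1)[.

Section cells.
Context {m : nat} (m_gt0 : (0 < m)%N).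
Local Notation open_cell := (open_cell m).
Local Notation half_open_cell := (half_open_cell m).

Let m_gt0R : (0 : R) < m%:R. Proof. by rewrite ltr0n. Qed.

Let cell_rightE (i : nat) : i%:R / m%:R + m%:R^-1 = i.+1%:R / m%:R :> R.
Proof. by rewrite -addn1 natrD mulrDl mul1r. Qed.

Lemma half_open_cell_cover {s : R} : 0 <= s -> s < 1 ->
  exists2 i, (i < m)%N & half_open_cell i s.
Proof.
move=> s0 s1; set k := Num.floor (m%:R * s).
have k0 : 0 <= k by rewrite /k floor_ge0 mulr_ge0 // ltW.
have km : k < m%:Z by rewrite /k floor_lt_int -[X in _ < X]mulr1 ltr_pM2l.
have kE : (`|k|%N%:R : R) = k%:~R by rewrite natr_absz ger0_norm.
exists `|k|%N; first by rewrite -ltz_nat gez0_abs.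
have /andP[ks sk] := floor_itv (m%:R * s).
rewrite /half_open_cell /= in_itv /= cell_rightE -addn1 natrD kE.
by rewrite ler_pdivrMr // ltr_pdivlMr // ![s * _]mulrC ks; rewrite intrD in sk.
Qed.

Lemma cell_left_half_open_cell {i : nat} {s : R} :
  half_open_cell i s -> cell_left m s = i%:R / m%:R.
Proof.
rewrite /half_open_cell /= in_itv /= cell_rightE => /andP[i_le s_lt].
rewrite /cell_left (@floor_def _ _ i) //.
rewrite intrD -!pmulrn -natrD addn1 mulrC -ler_pdivrMr // -ltr_pdivlMr //.
by rewrite i_le s_lt.
Qed.

Lemma half_open_cell_ge0_lt1 {i : nat} {s : R} : (i < m)%N ->
  half_open_cell i s -> 0 <= s < 1.
Proof.
rewrite /half_open_cell /= in_itv /= cell_rightE => im /andP[i_le s_lt].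
rewrite (le_trans _ i_le) ?divr_ge0 //=; apply: lt_le_trans s_lt _.
by rewrite ler_pdivrMr // mul1r ler_nat.
Qed.

Lemma open_cell_sub01 (i : nat) : (i < m)%N -> open_cell i `<=` I01.
Proof.
move=> im t; rewrite /open_cell /= !in_itv /= cell_rightE => /andP[i_lt t_lt].
rewrite (le_lt_trans _ i_lt) ?divr_ge0 //=; apply: lt_le_trans t_lt _.
by rewrite ler_pdivrMr // mul1r ler_nat.
Qed.

Lemma measure_open_cell (i : nat) : mu (open_cell i) = (m%:R^-1)%:E.
Proof.
rewrite /open_cell lebesgue_measure_itv /= lte_fin ltrDl invr_gt0 m_gt0R.
by rewrite -EFinD addrAC subrr add0r.
Qed.

Lemma measure_half_open_cell (i : nat) : mu (half_open_cell i) = (m%:R^-1)%:E.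
Proof.
rewrite /half_open_cell lebesgue_measure_itv /= lte_fin ltrDl invr_gt0 m_gt0R.
by rewrite -EFinD addrAC subrr add0r.
Qed.

Lemma trivIset_open_cell : trivIset setT open_cell.
Proof.
move=> i j _ _ [t []]; rewrite /open_cell /= !in_itv /= !cell_rightE.
move=> /andP[it ti] /andP[jt tj].
have mV : (0 : R) < m%:R^-1 by rewrite invr_gt0.
have ij : (i%:R : R) < j.+1%:R by rewrite -(ltr_pM2r mV); exact: lt_trans it tj.
have ji : (j%:R : R) < i.+1%:R by rewrite -(ltr_pM2r mV); exact: lt_trans jt ti.
move: ij ji; rewrite !ltr_nat !ltnS => ij ji.
by apply/eqP; rewrite eqn_leq ij ji.
Qed.

Lemma measurable_open_cell (i : nat) : measurable (open_cell i).
Proof. exact: measurable_itv. Qed.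

Lemma integrable_open_cell {i : nat} {f : R -> \bar R} : (i < m)%N ->
  mu.-integrable I01 f -> mu.-integrable (open_cell i) f.
Proof.
move=> im; apply: integrableS => //; first exact: measurable_open_cell.
exact: open_cell_sub01.
Qed.

Lemma sum_Rintegral_open_cell_le (f : R -> R) : (forall t, I01 t -> 0 <= f t) ->
  mu.-integrable I01 (EFin \o f) ->
  \sum_(i < m) Rintegral mu (open_cell i) f <= Rintegral mu I01 f.
Proof.
move=> f0 intf; have mf := measurable_int _ intf.
have cells_sub : \big[setU/set0]_(i <- index_iota 0 m) open_cell i `<=` I01.
  rewrite big_seq; apply: (big_ind (fun U => U `<=` I01)) => //.
    by move=> U V UI VI t [/UI|/VI].
  by move=> i; rewrite mem_index_iota => /open_cell_sub01.
rewrite -lee_fin -sumEFin /Rintegral fineK ?integrable_fin_num //.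
rewrite (eq_bigr (fun i : 'I_m => \int[mu]_(t in open_cell i) (f t)%:E)%E); last first.
  move=> i _; rewrite fineK // integrable_fin_num //; first exact: measurable_open_cell.
  exact: integrable_open_cell.
rewrite -(big_mkord xpredT (fun i => \int[mu]_(t in open_cell i) (f t)%:E)%E).
rewrite -ge0_integral_bigsetU //.
- apply: ge0_subset_integral => //.
  by apply: bigsetU_measurable => i _; exact: measurable_open_cell.
- exact: measurable_open_cell.
- by rewrite /index_iota iota_uniq.
- exact: sub_trivIset trivIset_open_cell.
- exact: measurable_funS mf.
- by move=> t /cells_sub /f0; rewrite lee_fin.
Qed.

Lemma integral_le_cellwise (g : R -> R) (c : nat -> R) : (forall i, 0 <= c i) ->
  (forall i s, (i < m)%N -> half_open_cell i s -> 0 <= g s <= c i) ->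
  (\int[mu]_(s in I01) (g s)%:E <= (\sum_(i < m) c i / m%:R)%:E)%E.
Proof.
move=> c0 gc.
have term_ge0 i s : 0 <= c i * \1_(half_open_cell i) s.
  by rewrite mulr_ge0 // indicE; case: (_ \in _).
pose step s := \sum_(i < m) c i * \1_(half_open_cell i) s.
apply: (@le_trans _ _ (\int[mu]_(s in I01) (step s)%:E)%E).
  apply: ge0_le_integral_nonmeasurable => s; rewrite /= in_itv /= => /andP[s0 s1];
    have [i im si] := half_open_cell_cover (ltW s0) s1;
    have /andP[gs0 gsc] := gc i s im si; rewrite lee_fin //.
  rewrite /step (bigD1 (Ordinal im)) //= indicE mem_set // mulr1.
  by apply: le_trans gsc _; rewrite lerDl; apply: sumr_ge0.
rewrite /step; under eq_integral do rewrite -sumEFin.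
rewrite ge0_integral_sum //; last 2 first.
- move=> i; apply/measurable_EFinP; apply: measurable_funM => //.
  by apply: measurable_indic; exact: measurable_itv.
- by move=> i s _; rewrite lee_fin.
rewrite -sumEFin; apply: lee_sum => i _.
under eq_integral do rewrite EFinM.
rewrite ge0_integralZl ?lee_fin //; last first.
  by apply: measurableT_comp => //; apply: measurable_indic; exact: measurable_itv.
rewrite integral_indic //; last exact: measurable_itv.
rewrite EFinM lee_pmul ?lee_fin // -(measure_half_open_cell i).
by apply: measureIl; exact: measurable_itv.
Qed.

Lemma Rintegral_half_open_cell (i : nat) (f : R -> R) :
  measurable_fun (open_cell i) f ->
  Rintegral mu (half_open_cell i) f = Rintegral mu (open_cell i) f.
Proof.
move=> mf; rewrite /Rintegral; congr fine.
by rewrite -integral_itv_obnd_cbnd //; exact/measurable_EFinP.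
Qed.

Lemma Qm_cell {x} {i : nat} {s : R} : inL2 x -> (i < m)%N -> half_open_cell i s ->
  Qm m x s = m%:R * Rintegral mu (open_cell i) x.
Proof.
move=> [mx _] im si.
rewrite /Qm (half_open_cell_ge0_lt1 im si) /cell (cell_left_half_open_cell si).
rewrite Rintegral_half_open_cell //.
by apply: measurable_funS mx => //; exact: open_cell_sub01.
Qed.

Lemma Qms_cell sigma {x} {i : nat} {s : R} :
  inL2 x -> (i < m)%N -> half_open_cell i s ->
  Qms sigma m x s =
    expR (sigma * s) * (m%:R * Rintegral mu (open_cell i) (damped sigma x)).
Proof.
move=> [mx _] im si.
rewrite /Qms (half_open_cell_ge0_lt1 im si) /cell (cell_left_half_open_cell si).
rewrite Rintegral_half_open_cell //; apply: measurable_damped.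
by apply: measurable_funS mx => //; exact: open_cell_sub01.
Qed.

Lemma wnorm_le_cellwise_dominated sigma x (G : R -> R) (K : R) :
  0 <= sigma -> 0 <= K -> inL2 x ->
  (forall i s, (i < m)%N -> half_open_cell i s ->
     exists2 h, mu.-integrable (open_cell i) (EFin \o h) &
       (forall t, open_cell i t -> `|h t| <= K * `|damped sigma x t|) /\
       expR (- (sigma * s)) * G s = m%:R * Rintegral mu (open_cell i) h) ->
  wnorm sigma G <= K * wnorm sigma x.
Proof.
move=> s0 K0 hx hG.
have hy := damped_inL2 s0 hx; have inty := inL2_integrable hy.
case: hy => _ inty2; rewrite !wnormE; set y := damped sigma x in hG inty inty2 *.
pose Y i := Rintegral mu (open_cell i) (fun t => y t ^+ 2).
have Y0 i : 0 <= Y i by apply: Rintegral_ge0 => t _; exact: sqr_ge0.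
have cell_bound i s : (i < m)%N -> half_open_cell i s ->
    0 <= damped sigma G s ^+ 2 <= K ^+ 2 * m%:R * Y i.
  move=> im si; have [h inth [hy hGs]] := hG i s im si.
  rewrite sqr_ge0 /= /damped hGs exprMn.
  have -> : K ^+ 2 * m%:R * Y i = m%:R ^+ 2 * (K ^+ 2 * m%:R^-1 * Y i).
    by field; rewrite gt_eqF.
  rewrite ler_wpM2l ?sqr_ge0 //.
  apply: (sqr_Rintegral_le_dominated (mu := mu) (measurable_open_cell i)
    (measure_open_cell i) _ K0 inth _ _ hy); first by rewrite invr_gt0.
  - exact: integrable_open_cell.
  - exact: integrable_open_cell.
have := @integral_le_cellwise _ (fun i => K ^+ 2 * m%:R * Y i)
  (fun i => mulr_ge0 (mulr_ge0 (sqr_ge0 K) (ler0n _ m)) (Y0 i)) cell_bound.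
under eq_bigr do rewrite mulrAC mulfK ?gt_eqF //.
rewrite -mulr_sumr => int_le.
have int_ge0 : (0 <= \int[mu]_(s in I01) (damped sigma G s ^+ 2)%:E)%E.
  by apply: integral_ge0 => s _; rewrite lee_fin sqr_ge0.
rewrite -[K]ger0_norm // -sqrtr_sqr -sqrtrM ?sqr_ge0 // ler_sqrt; last first.
  by rewrite mulr_ge0 ?sqr_ge0 // Rintegral_ge0 // => t _; exact: sqr_ge0.
apply: le_trans (_ : _ <= K ^+ 2 * \sum_(i < m) Y i) _.
  rewrite /Rintegral -lee_fin fineK // ge0_fin_numE //.
  by apply: le_lt_trans int_le _; exact: ltry.
rewrite ler_wpM2l ?sqr_ge0 // sum_Rintegral_open_cell_le // => t _.
exact: sqr_ge0.
Qed.

Lemma normr_expRB1_cell_le {sigma} {i : nat} {s t : R} : 0 < sigma -> sigma <= m%:R ->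
  half_open_cell i s -> open_cell i t ->
  `|expR (sigma * (t - s)) - 1| <= 2 * sigma / m%:R.
Proof.
rewrite /half_open_cell /open_cell /= !in_itv /=.
move=> s0 sm /andP[i_le s_lt] /andP[i_lt t_lt].
rewrite -mulrA; apply: normr_expRB1_le; last by rewrite ler_pdivrMr // mul1r.
rewrite normrM gtr0_norm // ler_wpM2l ?ltW // ltr_norml; apply/andP; split; lra.
Qed.

End cells.

End unit_interval.

Theorem lemma3p1 (R : realType) (sigma : R) (m : nat)
  (hsigma : 0 < sigma) (hm : sigma <= m%:R) :
  (forall x : R -> R, inL2 x ->
     wnorm sigma (fun s => Qm m x s - Qms sigma m x s)
       <= (2 * sigma / m%:R) * wnorm sigma x) /\
  (forall x : R -> R, inL2 x ->
     wnorm sigma (Qm m x) <= (1 + 2 * sigma / m%:R) * wnorm sigma x).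
Proof.
have m_gt0 : (0 < m)%N by rewrite -(ltr0n R); exact: lt_le_trans hm.
have K0 : 0 <= 2 * sigma / m%:R by rewrite divr_ge0 // mulr_ge0 // ltW.
have s0 := ltW hsigma.
split=> x hx; apply: (wnorm_le_cellwise_dominated m_gt0); rewrite ?addr_ge0 //;
  move=> i s im si;
  have intx := integrable_open_cell m_gt0 im (inL2_integrable hx);
  have inty := integrable_open_cell m_gt0 im (inL2_integrable (damped_inL2 s0 hx));
  have mO := @measurable_open_cell R m i;
  have kernel t (ti : open_cell m i t) := normr_expRB1_cell_le m_gt0 hsigma hm si ti.
- exists (fun t => expR (- (sigma * s)) * x t - damped sigma x t).
    by apply: integrableB_fun => //; exact: integrableZl_fun.
  split=> [t ti|].
    rewrite expRN_mul_damped -[X in _ - X]mul1r -mulrBl normrM.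
    by rewrite ler_wpM2r // kernel.
  rewrite (Qm_cell m_gt0 hx im si) (Qms_cell m_gt0 sigma hx im si).
  rewrite RintegralB //; last exact: integrableZl_fun.
  rewrite RintegralZl // mulrBr [RHS]mulrBr; congr (_ - _); first exact: mulrCA.
  by rewrite mulrA -expRD addNr expR0 mul1r.
- exists (fun t => expR (- (sigma * s)) * x t); first exact: integrableZl_fun.
  split=> [t ti|].
    rewrite expRN_mul_damped normrM ler_wpM2r // ger0_norm ?expR_ge0 //.
    by rewrite -[expR _](subrK 1) addrC lerD2l (le_trans (ler_norm _)) // kernel.
  by rewrite (Qm_cell m_gt0 hx im si) RintegralZl // mulrCA.
Qed.
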